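(* In $\mathbb Z[E(\mathbb Q)]^-$ the following identities hold: $$7\,(x)\diamond(y)+(x_1)\diamond(y_1)=-2\,(-y)\diamond(1+y)+(x-y)\diamond(1-x+y),$$ $$5\,(x)\diamond(y)+(x_2)\diamond(y_2)=-\,(-y)\diamond(1+y)+(x-y)\diamond(1-x+y).$$
   Context: Let $E$ be the elliptic curve $y^2+y=x^3-x$ over $\mathbb Q$ (conductor 37), with origin the point at infinity $O$. Its Mordell–Weil group $E(\mathbb Q)$ is infinite cyclic, generated by $P=(0,0)$. On $E$, consider the rational functions $x,\ y$ and $$x_1=x-1,\quad y_1=y-2x+2,\qquad x_2=x-1,\quad y_2=-x+y+1,$$ together with $-y,\ 1+y,\ x-y,\ 1-x+y$. All of these have divisors supported on $E(\mathbb Q)$. Let $\mathbb Z[E(\mathbb Q)]^-$ be the quotient of the free abelian group $\mathbb Z[E(\mathbb Q)]$ on the symbols $[Q]$, $Q\in E(\mathbb Q)$, by the subgroup generated by all $[Q]+[-Q]$. For nonconstant functions $f,g$ on $E$ with divisors $$(f)=\sum_{n\in\mathbb Z}a_n[nP],\qquad (g)=\sum_{n\in\mathbb Z}b_n[nP],$$ define $$(f)\diamond(g)=\sum_{m,n}a_nb_m\,[(n-m)P]\in\mathbb Z[E(\mathbb Q)]^-.$$ *)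

From HB Require Import structures.
From mathcomp Require Import all_boot all_order all_algebra.
From mathcomp Require Import boolp classical_sets fsbigop.
Set Implicit Arguments. Unset Strict Implicit. Unset Printing Implicit Defensive.
Import Order.TTheory GRing.Theory Num.Theory.
Local Open Scope ring_scope.

(* A point of the projective plane chart: [None] is the point at infinity O,
   [Some (x, y)] the affine point (x, y). *)
Definition pt := option (rat * rat).

Definition Epts : set pt :=
  [set Q | match Q with
           | None => True
           | Some (x, y) => y ^+ 2 + y = x ^+ 3 - x
           end].

(* Group law on E(Q) (chord-tangent, origin O); for a general Weierstrass
   equation with a1 = a2 = a6 = 0, a3 = 1, a4 = -1. *)
Definition Eneg (Q : pt) : pt :=
  match Q with None => None | Some (x, y) => Some (x, - y - 1) end.

Definition Eadd (P1 P2 : pt) : pt :=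
  match P1, P2 with
  | None, _ => P2
  | _, None => P1
  | Some (x1, y1), Some (x2, y2) =>
      if (x1 == x2) && (y1 + y2 + 1 == 0) then None
      else
        let l := if x1 == x2 then (3 * x1 ^+ 2 - 1) / (2 * y1 + 1)
                 else (y2 - y1) / (x2 - x1) in
        let x3 := l ^+ 2 - x1 - x2 in
        Some (x3, - l * (x3 - x1) - y1 - 1)
  end.

Definition Esub (P1 P2 : pt) : pt := Eadd P1 (Eneg P2).

Definition P0 : pt := Some (0, 0).

(** * Regular functions on E - O: f = a(x) + b(x) y, represented by (a, b) *)
Definition fn := ({poly rat} * {poly rat})%type.

(* Order of f at O: x has a double pole and y a triple pole at O,
   so ord_O(a + b y) = - max(2 deg a, 2 deg b + 3) (f <> 0). *)
Definition ordO (f : fn) : int :=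
  - (maxn (if f.1 == 0 then 0%N else (2 * (size f.1).-1)%N)
          (if f.2 == 0 then 0%N else (2 * (size f.2).-1 + 3)%N))%:Z.

(* At an affine point Q = (x0, y0) of E with 2 y0 + 1 <> 0, t = x - x0 is a
   local parameter, and y has the power series expansion
   y = sum_k c_k t^k determined by Y^2 + Y = (x0+t)^3 - (x0+t), Y(0) = y0.
   [rhs_coef x0 k] is the t^k coefficient of (x0+t)^3 - (x0+t). *)
Definition rhs_coef (x0 : rat) (k : nat) : rat :=
  match k with
  | 0 => x0 ^+ 3 - x0
  | 1 => 3 * x0 ^+ 2 - 1
  | 2 => 3 * x0
  | 3 => 1
  | _ => 0
  end.

Fixpoint yser (x0 y0 : rat) (n : nat) : seq rat :=
  match n with
  | 0 => [:: y0]
  | m.+1 =>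
      let s := yser x0 y0 m in
      rcons s ((rhs_coef x0 m.+1 - \sum_(1 <= i < m.+1) s`_i * s`_(m.+1 - i))
               / (2 * y0 + 1))
  end.

Definition ycoef (x0 y0 : rat) (k : nat) : rat := (yser x0 y0 k)`_k.

Definition fcoef (x0 y0 : rat) (f : fn) (k : nat) : rat :=
  (f.1 \Po ('X + x0%:P))`_k
  + \sum_(0 <= i < k.+1) (f.2 \Po ('X + x0%:P))`_i * ycoef x0 y0 (k - i).

(* Order of vanishing of f at the affine point (x0, y0): the least k with a
   nonzero t^k coefficient.  (No rational point of E has 2 y0 + 1 = 0, so the
   last branch never occurs on E(Q).) *)
Definition ordA (x0 y0 : rat) (f : fn) : int :=
  if 2 * y0 + 1 == 0 then 0
  else match pselect (exists k, fcoef x0 y0 f k != 0) with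
       | left H => (ex_minn H)%:Z
       | right _ => 0
       end.

Definition divf (f : fn) (Q : pt) : int :=
  match Q with None => ordO f | Some (x0, y0) => ordA x0 y0 f end.

(* Elements of Z[E(Q)] are (finitely supported) functions E(Q) -> int,
   u = sum_Q u(Q) [Q]. *)

(* (f) <> (g) = sum_{Q,R} ord_Q(f) ord_R(g) [Q - R]  (finitely supported sums;
   with Q = nP, R = mP this is sum_{m,n} a_n b_m [(n-m)P]). *)
Definition diamond (f g : fn) : pt -> int :=
  fun S => \sum_(Q \in Epts) \sum_(R \in Epts)
             divf f Q * divf g R * ((Esub Q R == S) : int).

(* u = v in Z[E(Q)]^- : u - v lies in the subgroup generated by the
   [Q] + [-Q], i.e. u - v = sum_Q c(Q) ([Q] + [-Q]) for some finitely
   supported c. *)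
Definition eq_minus (u v : pt -> int) : Prop :=
  exists (c : pt -> int) (s : seq pt),
    (forall Q, Epts Q -> c Q != 0 -> Q \in s) /\
    (forall S, Epts S -> u S - v S = c S + c (Eneg S)).

Definition fx  : fn := ('X, 0).
Definition fy  : fn := (0, 1).
Definition fx1 : fn := ('X - 1, 0).
Definition fy1 : fn := (- 2%:P * 'X + 2%:P, 1).
Definition fx2 : fn := ('X - 1, 0).
Definition fy2 : fn := (- 'X + 1, 1).
Definition fmy : fn := (0, - 1).
Definition f1py : fn := (1, 1).
Definition fxmy : fn := ('X, - 1).
Definition f1mxpy : fn := (1 - 'X, 1).

From mathcomp Require Import all_boot all_order all_algebra.
From mathcomp Require Import boolp classical_sets fsbigop.
From mathcomp Require Import ring lra.
Set Implicit Arguments. Unset Strict Implicit. Unset Printing Implicit Defensive.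
Import Order.TTheory GRing.Theory Num.Theory.
Local Open Scope ring_scope.

(* Each function in the statement is a line a x + b + c y.  Such a line has a
   pole of order 3 at O (order 2 if it is vertical) and meets E in the affine
   points where it vanishes; the local expansion of y in t = x - x0 shows that
   the order there is 1, or 2 at a point of tangency (no flex occurs).  So
   every divisor involved is an explicit finite sum over small multiples of P,
   each diamond becomes a finite sum that can be evaluated, and the difference
   of the two sides of each identity is written explicitly as
   sum_Q c(Q) ([Q] + [-Q]). *)

Definition zsum := seq (pt * int).

Definition zcoef (D : zsum) (S : pt) : int :=
  foldr (fun p acc => p.2 * ((p.1 == S) : int) + acc) 0 D.

Definition zsupp (D : zsum) : seq pt := map fst D.

Definition zscale (k : int) (D : zsum) : zsum := [seq (p.1, k * p.2) | p <- D].

Definition zdiamond (D1 D2 : zsum) : zsum :=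
  flatten [seq [seq (Esub p.1 q.1, p.2 * q.2) | q <- D2] | p <- D1].

Lemma zcoef_notin D S : S \notin zsupp D -> zcoef D S = 0.
Proof.
elim: D => [|[Q k] D IH] //=; rewrite inE negb_or => /andP[hQ hD].
by rewrite IH // eq_sym (negbTE hQ) mulr0 addr0.
Qed.

Lemma zcoef_cat D1 D2 S : zcoef (D1 ++ D2) S = zcoef D1 S + zcoef D2 S.
Proof. by elim: D1 => [|p D IH] /=; rewrite ?add0r // IH addrA. Qed.

Lemma zcoef_scale k D S : zcoef (zscale k D) S = k * zcoef D S.
Proof. by elim: D => [|p D IH] /=; rewrite ?mulr0 // IH mulrDr mulrA. Qed.

Lemma zcoef_uniq D p : uniq (zsupp D) -> p \in D -> zcoef D p.1 = p.2.
Proof.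
elim: D => [|q D IH] //= /andP[hq hD]; rewrite inE => /orP[/eqP->|hp].
  by rewrite eqxx mulr1 zcoef_notin ?addr0.
rewrite IH // (_ : q.1 == p.1 = false) ?mulr0 ?add0r //.
by apply: contraNF hq => /eqP ->; apply: map_f.
Qed.

Lemma big_zsupp D (G : pt -> int) : uniq (zsupp D) ->
  \sum_(Q <- zsupp D) zcoef D Q * G Q = \sum_(p <- D) p.2 * G p.1.
Proof.
elim: D => [|[Q k] D IH] /=; first by rewrite !big_nil.
move=> /andP[hQ hD]; rewrite !big_cons /= eqxx (zcoef_notin hQ) addr0 mulr1 -IH //.
congr (_ + _); rewrite big_seq [RHS]big_seq; apply: eq_bigr => R hR.
have -> : (Q == R) = false by apply/eqP => eQR; rewrite eQR hR in hQ.
by rewrite mulr0 add0r.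
Qed.

Definition on_curve (Q : pt) : bool :=
  if Q is Some (x, y) then y ^+ 2 + y == x ^+ 3 - x else true.

Lemma on_curveP Q : on_curve Q -> Epts Q.
Proof. by case: Q => [[x y]|] //= /eqP. Qed.

Lemma fsbig_zsupp D (G : pt -> int) : uniq (zsupp D) -> all on_curve (zsupp D) ->
  \sum_(Q \in Epts) zcoef D Q * G Q = \sum_(p <- D) p.2 * G p.1.
Proof.
move=> hu hE; rewrite -big_zsupp // (fsbigE (zsupp D)) //.
- rewrite big_seq_cond [RHS]big_seq; apply: eq_bigl => Q.
  by case hQ: (Q \in zsupp D) => //=; apply/mem_set/on_curveP/(allP hE).
- by move=> Q /= hQ; apply/on_curveP/(allP hE).
- by move=> Q _ hQ; rewrite zcoef_notin // mul0r.
Qed.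

Definition divisor_of (f : fn) (D : zsum) : Prop :=
  [/\ forall Q, Epts Q -> divf f Q = zcoef D Q, uniq (zsupp D) & all on_curve (zsupp D)].

Lemma diamond_zcoef f g Df Dg : divisor_of f Df -> divisor_of g Dg ->
  diamond f g =1 zcoef (zdiamond Df Dg).
Proof.
move=> [hf uf ef] [hg ug eg] S; rewrite /diamond.
rewrite (eq_fsbigr (fun Q => zcoef Df Q *
   \sum_(R \in Epts) zcoef Dg R * ((Esub Q R == S) : int))); last first.
  move=> Q /set_mem hQ; rewrite hf // mulr_fsumr; apply: eq_fsbigr => R /set_mem hR.
  by rewrite hg // mulrA.
rewrite fsbig_zsupp // /zdiamond.
elim: Df {hf uf ef} => [|p Df IH] /=; first by rewrite big_nil.
rewrite big_cons zcoef_cat IH fsbig_zsupp // big_distrr /=; congr (_ + _); clear IH.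
elim: Dg {hg ug eg} => [|q Dg IHg] /=; first by rewrite big_nil.
by rewrite big_cons IHg mulrA.
Qed.

Lemma EnegK : involutive Eneg.
Proof. by case=> [[x y]|] //=; congr (Some (_, _)); ring. Qed.

(* Eneg flips the sign of 2y + 1, so [upper] picks one point of each pair
   {Q, -Q} of affine points; O = -O gets half of its coefficient. *)
Definition upper (Q : pt) : bool := if Q is Some (_, y) then 0 < 2 * y + 1 else false.

Definition minus_witness (D : zsum) : zsum :=
  [seq (Q, if Q == None then (zcoef D Q %/ 2)%Z else if upper Q then zcoef D Q else 0)
  | Q <- undup (zsupp D)].

Definition minus_check (D : zsum) : bool :=
  let C := minus_witness D in
  all (fun Q => zcoef D Q == zcoef C Q + zcoef C (Eneg Q))
      (zsupp D ++ zsupp C ++ map Eneg (zsupp C)).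

Lemma eq_minus_zcoef (u v : pt -> int) D :
  (forall S, Epts S -> u S - v S = zcoef D S) -> minus_check D -> eq_minus u v.
Proof.
move=> huv hD; exists (zcoef (minus_witness D)), (zsupp (minus_witness D)); split.
  by move=> Q _; apply: contraR => /zcoef_notin ->.
move=> S hS; rewrite huv //.
have [hin|] := boolP (S \in zsupp D ++ zsupp (minus_witness D) ++
                            map Eneg (zsupp (minus_witness D))).
  exact/eqP/(allP hD).
rewrite !mem_cat !negb_or => /and3P[h1 h2 h3].
rewrite !zcoef_notin // ?addr0 //.
by apply: contra h3 => h; rewrite -[S]EnegK; apply: map_f.
Qed.

Definition line (a b c : rat) : fn := (a%:P * 'X + b%:P, c%:P).

Definition tangent_slope (x0 y0 : rat) : rat := (3 * x0 ^+ 2 - 1) / (2 * y0 + 1).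

Lemma ycoef1 x0 y0 : ycoef x0 y0 1 = tangent_slope x0 y0.
Proof. by rewrite /ycoef /= big_geq // subr0. Qed.

Lemma ycoef2 x0 y0 :
  ycoef x0 y0 2 = (3 * x0 - tangent_slope x0 y0 ^+ 2) / (2 * y0 + 1).
Proof. by rewrite -ycoef1 /ycoef /= big_nat1 /= expr2. Qed.

Lemma fcoef_line a b c x0 y0 k : fcoef x0 y0 (line a b c) k =
  (if k == 0%N then a * x0 + b else if k == 1%N then a else 0) + c * ycoef x0 y0 k.
Proof.
rewrite /fcoef /line /= comp_polyD comp_polyM !comp_polyC comp_polyX.
rewrite big_nat_recl // big1 ?addr0; last by move=> i _; rewrite coefC /= mul0r.
rewrite coefC /= subn0 coefD coefCM coefD coefX !coefC.
by case: k => [|[|k]] /=; rewrite ?mulr0 ?mulr1 ?addr0 ?add0r.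
Qed.

Lemma ordA_first_nonzero x0 y0 f k : 2 * y0 + 1 != 0 ->
  (forall i, (i < k)%N -> fcoef x0 y0 f i = 0) -> fcoef x0 y0 f k != 0 ->
  ordA x0 y0 f = k%:Z.
Proof.
move=> hy hlt hk; rewrite /ordA (negbTE hy); case: pselect => [H|[]]; last by exists k.
case: ex_minnP => m hm /(_ k hk) hmk; congr Posz; apply/eqP; rewrite eqn_leq hmk /=.
by rewrite leqNgt; apply/negP => /hlt; move/eqP: hm.
Qed.

(* The value 3 stands for "at least 3" (a flex of the line). *)
Definition line_order (a b c x0 y0 : rat) : nat :=
  if a * x0 + b + c * y0 != 0 then 0
  else if a + c * tangent_slope x0 y0 != 0 then 1
  else if c * (3 * x0 - tangent_slope x0 y0 ^+ 2) != 0 then 2 else 3.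

Lemma ordA_line a b c x0 y0 : 2 * y0 + 1 != 0 -> (line_order a b c x0 y0 < 3)%N ->
  ordA x0 y0 (line a b c) = line_order a b c x0 y0.
Proof.
move=> hy; rewrite /line_order.
have f0 : fcoef x0 y0 (line a b c) 0 = a * x0 + b + c * y0 by rewrite fcoef_line.
have f1 : fcoef x0 y0 (line a b c) 1 = a + c * tangent_slope x0 y0.
  by rewrite fcoef_line ycoef1.
have f2 : fcoef x0 y0 (line a b c) 2 =
          c * (3 * x0 - tangent_slope x0 y0 ^+ 2) / (2 * y0 + 1).
  by rewrite fcoef_line ycoef2 add0r mulrA.
have [z0|nz0] /= := eqVneq (a * x0 + b + c * y0) 0; last first.
  by move=> _; rewrite (ordA_first_nonzero (k := 0)) ?f0.
have [z1|nz1] /= := eqVneq (a + c * tangent_slope x0 y0) 0; last first.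
  by move=> _; rewrite (ordA_first_nonzero (k := 1)) ?f1 // => -[|] // _; rewrite f0.
have [z2|nz2] //= := eqVneq (c * (3 * x0 - tangent_slope x0 y0 ^+ 2)) 0.
move=> _; apply: (ordA_first_nonzero (k := 2)) => //; last by rewrite f2 mulf_neq0 ?invr_eq0.
by case=> [|[|]] // _; rewrite ?f0 ?f1.
Qed.

Lemma ordO_line a b c :
  ordO (line a b c) = - (maxn (2 * (a != 0)) (3 * (c != 0)))%:Z.
Proof.
rewrite /ordO /line /=.
have hs := size_MXaddC a%:P b.
rewrite polyC_eq0 size_polyC in hs.
rewrite -size_poly_eq0 hs polyC_eq0 size_polyC.
by case: (a == 0); case: (b == 0); case: (c == 0).
Qed.

Definition line_mult_ok (a b c : rat) (p : pt * int) : bool :=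
  if p.1 is Some (x0, y0) then
    [&& 2 * y0 + 1 != 0, (line_order a b c x0 y0 < 3)%N & p.2 == line_order a b c x0 y0]
  else p.2 == - (maxn (2 * (a != 0)) (3 * (c != 0)))%:Z.

Lemma divisor_of_line a b c D :
  uniq (zsupp D) -> all on_curve (zsupp D) -> None \in zsupp D ->
  all (line_mult_ok a b c) D ->
  (forall x y, y ^+ 2 + y = x ^+ 3 - x -> a * x + b + c * y = 0 ->
     Some (x, y) \in zsupp D) ->
  divisor_of (line a b c) D.
Proof.
move=> hu hE hO hok hzero; split=> // Q EQ.
have [/mapP[p hp ->]|hQ] := boolP (Q \in zsupp D).
  rewrite zcoef_uniq //; move: (allP hok p hp); rewrite /line_mult_ok.
  case: p {hp} => [[[x0 y0]|] k] /=; last by move/eqP->; rewrite ordO_line.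
  by case/and3P=> hy hlt /eqP->; rewrite ordA_line.
rewrite zcoef_notin //; case: Q EQ hQ => [[x0 y0]|] /= EQ hQ; last by rewrite hO in hQ.
have off : a * x0 + b + c * y0 != 0 by apply: contra hQ => /eqP; apply: hzero.
have [hy|hy] := eqVneq (2 * y0 + 1) 0; first by rewrite /ordA hy eqxx.
have lo0 : line_order a b c x0 y0 = 0%N by rewrite /line_order off.
by rewrite ordA_line ?lo0.
Qed.

Lemma factored_root2 (y r1 r2 : rat) : (y - r1) * (y - r2) = 0 -> y = r1 \/ y = r2.
Proof. by move/eqP; rewrite mulf_eq0 !subr_eq0 => /orP[]/eqP; [left|right]. Qed.

Lemma factored_root3 (x r1 r2 r3 : rat) :
  (x - r1) * (x - r2) * (x - r3) = 0 -> [\/ x = r1, x = r2 | x = r3].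
Proof.
move/eqP; rewrite !mulf_eq0 !subr_eq0 => /orP[/orP[]|] /eqP.
- exact: Or31.
- exact: Or32.
- exact: Or33.
Qed.

(* In terms of the generator P = (0, 0): 2P = (1, 0), 3P = (-1, -1),
   4P = (2, -3), and -(x, y) = (x, -y - 1). *)
Definition Dx : zsum := [:: (Some (0, 0), 1); (Some (0, -1), 1); (None, -2)].
Definition Dy : zsum :=
  [:: (Some (0, 0), 1); (Some (1, 0), 1); (Some (-1, 0), 1); (None, -3)].
Definition Dx1 : zsum := [:: (Some (1, 0), 1); (Some (1, -1), 1); (None, -2)].
Definition Dy1 : zsum := [:: (Some (1, 0), 2); (Some (2, 2), 1); (None, -3)].
Definition Dy2 : zsum := [:: (Some (0, -1), 2); (Some (1, 0), 1); (None, -3)].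
Definition D1py : zsum :=
  [:: (Some (0, -1), 1); (Some (1, -1), 1); (Some (-1, -1), 1); (None, -3)].
Definition Dxmy : zsum :=
  [:: (Some (0, 0), 1); (Some (2, 2), 1); (Some (-1, -1), 1); (None, -3)].

Lemma divisor_x : divisor_of fx Dx.
Proof.
have -> : fx = line 1 0 0 by rewrite /fx /line polyC1 mul1r polyC0 addr0.
apply: divisor_of_line; [by vm_compute.. | move=> x y hE hl].
have ex : x = 0 by lra.
subst x; have hroots : (y - 0) * (y - -1) = 0 by nra.
by case: (factored_root2 hroots) => ->; vm_compute.
Qed.

Lemma divisor_y : divisor_of fy Dy.
Proof.
have -> : fy = line 0 0 1 by rewrite /fy /line polyC0 mul0r addr0 polyC1.
apply: divisor_of_line; [by vm_compute.. | move=> x y hE hl].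
have ey : y = 0 by lra.
subst y; have hroots : (x - 0) * (x - 1) * (x - -1) = 0 by nra.
by case: (factored_root3 hroots) => ->; vm_compute.
Qed.

Lemma divisor_my : divisor_of fmy Dy.
Proof.
have -> : fmy = line 0 0 (-1) by rewrite /fmy /line polyC0 mul0r addr0 polyCN polyC1.
apply: divisor_of_line; [by vm_compute.. | move=> x y hE hl].
have ey : y = 0 by lra.
subst y; have hroots : (x - 0) * (x - 1) * (x - -1) = 0 by nra.
by case: (factored_root3 hroots) => ->; vm_compute.
Qed.

Lemma divisor_x1 : divisor_of fx1 Dx1.
Proof.
have -> : fx1 = line 1 (-1) 0 by rewrite /fx1 /line polyC1 mul1r polyC0 polyCN polyC1.
apply: divisor_of_line; [by vm_compute.. | move=> x y hE hl].
have ex : x = 1 by lra.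
subst x; have hroots : (y - 0) * (y - -1) = 0 by nra.
by case: (factored_root2 hroots) => ->; vm_compute.
Qed.

Lemma divisor_x2 : divisor_of fx2 Dx1.
Proof. exact: divisor_x1. Qed.

Lemma divisor_y1 : divisor_of fy1 Dy1.
Proof.
have -> : fy1 = line (-2) 2 1 by rewrite /fy1 /line polyCN polyC1.
apply: divisor_of_line; [by vm_compute.. | move=> x y hE hl].
have ey : y = 2 * x - 2 by lra.
subst y; have hroots : (x - 1) * (x - 1) * (x - 2) = 0 by nra.
by case: (factored_root3 hroots) => ->; vm_compute.
Qed.

Lemma divisor_y2 : divisor_of fy2 Dy2.
Proof.
have -> : fy2 = line (-1) 1 1 by rewrite /fy2 /line !polyCN polyC1 mulN1r.
apply: divisor_of_line; [by vm_compute.. | move=> x y hE hl].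
have ey : y = x - 1 by lra.
subst y; have hroots : (x - 0) * (x - 0) * (x - 1) = 0 by nra.
by case: (factored_root3 hroots) => ->; vm_compute.
Qed.

Lemma divisor_1mxpy : divisor_of f1mxpy Dy2.
Proof.
have -> : f1mxpy = fy2 by rewrite /f1mxpy /fy2 addrC.
exact: divisor_y2.
Qed.

Lemma divisor_1py : divisor_of f1py D1py.
Proof.
have -> : f1py = line 0 1 1 by rewrite /f1py /line polyC0 mul0r add0r polyC1.
apply: divisor_of_line; [by vm_compute.. | move=> x y hE hl].
have ey : y = -1 by lra.
subst y; have hroots : (x - 0) * (x - 1) * (x - -1) = 0 by nra.
by case: (factored_root3 hroots) => ->; vm_compute.
Qed.

Lemma divisor_xmy : divisor_of fxmy Dxmy.
Proof.
have -> : fxmy = line 1 0 (-1).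
  by rewrite /fxmy /line polyC1 mul1r polyC0 addr0 polyCN polyC1.
apply: divisor_of_line; [by vm_compute.. | move=> x y hE hl].
have ey : y = x by lra.
subst y; have hroots : (x - 0) * (x - 2) * (x - -1) = 0 by nra.
by case: (factored_root3 hroots) => ->; vm_compute.
Qed.

Theorem mainTheorem2 :
  eq_minus (fun S => 7 * diamond fx fy S + diamond fx1 fy1 S)
           (fun S => - 2 * diamond fmy f1py S + diamond fxmy f1mxpy S)
  /\
  eq_minus (fun S => 5 * diamond fx fy S + diamond fx2 fy2 S)
           (fun S => - diamond fmy f1py S + diamond fxmy f1mxpy S).
Proof.
have dxy := diamond_zcoef divisor_x divisor_y.
have dx1y1 := diamond_zcoef divisor_x1 divisor_y1.
have dx2y2 := diamond_zcoef divisor_x2 divisor_y2.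
have dmy1py := diamond_zcoef divisor_my divisor_1py.
have dxmy1mxpy := diamond_zcoef divisor_xmy divisor_1mxpy.
split.
- apply: (@eq_minus_zcoef _ _ (zscale 7 (zdiamond Dx Dy) ++ zdiamond Dx1 Dy1 ++
    zscale 2 (zdiamond Dy D1py) ++ zscale (-1) (zdiamond Dxmy Dy2))); last by vm_compute.
  by move=> S _; rewrite 3!zcoef_cat !zcoef_scale dxy dx1y1 dmy1py dxmy1mxpy; ring.
- apply: (@eq_minus_zcoef _ _ (zscale 5 (zdiamond Dx Dy) ++ zdiamond Dx1 Dy2 ++
    zdiamond Dy D1py ++ zscale (-1) (zdiamond Dxmy Dy2))); last by vm_compute.
  by move=> S _; rewrite 3!zcoef_cat !zcoef_scale dxy dx2y2 dmy1py dxmy1mxpy; ring.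
Qed.
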